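(* Let $\mathcal F_0\subset\mathcal F^d_{bm}(\mathbf I)$ be the subspace $\mathcal F_0=\mathrm{span}\{\Omega,\ g_{\xi_n}\otimes\cdots\otimes g_{\xi_1}: n\in\mathbb N,\ \xi_n\succ\xi_{n-1}\succ\cdots\succ\xi_1\text{ in }\mathbf I\}$. Each of $A^+_\xi,A^-_\xi,A^\circ_\xi$ preserves $\mathcal F_0$; let $\mathtt B^\varepsilon_\xi$ denote the restriction of $A^\varepsilon_\xi$ to $\mathcal F_0$ ($\varepsilon\in\{+,-,\circ\}$), so that $\mathtt B^\circ_\xi=\mathtt B^+_\xi\mathtt B^-_\xi$. Let $\mathcal C$ be the algebra of bounded operators on (the closure of) $\mathcal F_0$, $\varphi(X)=\langle X\Omega,\Omega\rangle$ the vacuum state, and $\mathcal C_\xi$ the $*$-algebra generated by $\mathtt B^+_\xi,\mathtt B^-_\xi,\mathtt B^\circ_\xi$. Then $\{\mathcal C_\xi:\xi\in\mathbf I\}$ is bm-independent in $(\mathcal C,\varphi)$ with respect to the poset $(\mathbf I,\preceq)$.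
   Context: Cones and index sets: fix $d\in\mathbb N$ and one of the following three cases. (a) $\Pi_d=\mathbb R_+^d\subset\mathbb R^d$ with coordinatewise order, and $\mathbf I=\mathbb N^d$. (b) The Lorentz cone $\Pi_d=\Lambda^1_d=\{(t;x)\in\mathbb R\times\mathbb R^d: t\ge\|x\|\}$, with $(s;y)\preceq(t;x)$ iff $t-s\ge\|x-y\|$, and $\mathbf I=\mathbb N\times\mathbb Z^d$. (c) $\Pi_d$ the cone of positive semidefinite real symmetric $d\times d$ matrices, with $\rho\preceq\xi$ iff $\xi-\rho$ is positive semidefinite, and $\mathbf I$ the set of positive semidefinite symmetric $d\times d$ matrices with integer entries. Write $\xi\prec\rho$ if $\xi\preceq\rho$ and $\xi\neq\rho$; $\xi\nsim\rho$ if incomparable. Discrete bm-Fock space: for each $\xi\in\mathbf I$ let $\mathcal H_\xi$ be a Hilbert space with orthonormal basis $\{e^m_\xi: m\ge0\}$, where $\Omega:=e^0_\xi$ is a common unit vector for all $\xi$. $\mathcal F^d_{bm}(\mathbf I)$ is the Hilbert space spanned by $\Omega$ and simple tensors $h_{\rho_n}\otimes\cdots\otimes h_{\rho_1}$ with $\rho_n\succ\cdots\succ\rho_1$ in $\mathbf I$, $h_{\rho_i}\in\mathcal H_{\rho_i}$, $h_{\rho_i}\perp\Omega$; tensors of different length or different index sequences are orthogonal, $\Omega$ is orthogonal to all tensors, and $\langle h_{\rho_n}\otimes\cdots\otimes h_{\rho_1},f_{\rho_n}\otimes\cdots\otimes f_{\rho_1}\rangle=\prod_i\langle h_{\rho_i},f_{\rho_i}\rangle$.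 Fix unit vectors $g_\xi\in\mathcal H_\xi$, $g_\xi\perp\Omega$. Creation: $A^+_\xi\Omega=g_\xi$, $A^+_\xi(h_{\rho_n}\otimes\cdots\otimes h_{\rho_1})=g_\xi\otimes h_{\rho_n}\otimes\cdots\otimes h_{\rho_1}$ if $\xi\succ\rho_n$, else $0$. Annihilation: $A^-_\xi\Omega=0$, $A^-_\xi(h_{\rho_n}\otimes\cdots\otimes h_{\rho_1})=\langle g_\xi,h_{\rho_n}\rangle h_{\rho_{n-1}}\otimes\cdots\otimes h_{\rho_1}$ if $\xi=\rho_n$ (giving $\langle g_\xi,h_{\rho_1}\rangle\Omega$ when $n=1$), else $0$. Conservation: $A^\circ_\xi\Omega=0$, $A^\circ_\xi(h_{\rho_n}\otimes\cdots\otimes h_{\rho_1})=\langle g_\xi,h_{\rho_n}\rangle h_{\rho_n}\otimes\cdots\otimes h_{\rho_1}$ if $\xi=\rho_n$, else $0$. bm-independence: for $(\mathcal A,\varphi)$ an algebra with a state and a poset $(\mathbb X,\preceq)$, subalgebras $\{\mathcal A_\xi\}$ are bm-independent if: (BM1) whenever $\xi\prec\rho\succ\eta$, or $\xi\nsim\rho\succ\eta$, or $\xi\prec\rho\nsim\eta$, then $a_1a_2a_3=\varphi(a_2)a_1a_3$ for all $a_1\in\mathcal A_\xi,a_2\in\mathcal A_\rho,a_3\in\mathcal A_\eta$; (BM2) whenever $\xi_1\succ\cdots\succ\xi_m\nsim\cdots\nsim\xi_k\prec\xi_{k+1}\prec\cdots\prec\xi_n$ for some $1\le m\le k\le n$ and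 $a_j\in\mathcal A_{\xi_j}$, then $\varphi(a_1\cdots a_n)=\prod_j\varphi(a_j)$. *)

From HB Require Import structures.
From mathcomp Require Import all_boot all_order all_algebra.
From mathcomp Require Import boolp classical_sets fsbigop reals.
From mathcomp.real_closed Require Import complex.

Set Implicit Arguments.
Unset Strict Implicit.
Unset Printing Implicit Defensive.

Import Order.TTheory GRing.Theory Num.Theory.
Local Open Scope ring_scope.

Section Generic.
Variables (T : choiceType) (le : T -> T -> Prop).

Definition plt (x y : T) : Prop := le x y /\ x <> y.
Definition incomp (x y : T) : Prop := ~ le x y /\ ~ le y x.

(* A list [:: xi_n; ...; xi_1] with xi_n > xi_(n-1) > ... > xi_1.
   The empty list stands for the vacuum Omega. *)
Fixpoint is_chain (s : seq T) : Prop :=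
  match s with
  | [::] => True
  | x :: s' => (match s' with [::] => True | y :: _ => plt y x end) /\ is_chain s'
  end.

Variable K : numClosedFieldType.

(* Vectors: coefficient functions w.r.t. the orthonormal system
   { Omega } u { g_{xi_n} (x) ... (x) g_{xi_1} : chains }.
   The coefficient at the chain c is v c. *)
Definition vect := seq T -> K.

Definition F0 (v : vect) : Prop :=
  exists s : seq (seq T), forall c, v c != 0 -> c \in s /\ is_chain c.

Definition inner (u v : vect) : K := \sum_(c \in [set: seq T]) u c * (v c)^*.

Definition Omega : vect := fun c => (c == [::])%:R.

Definition vac_state (X : vect -> vect) : K := inner (X Omega) Omega.

(* B^+_xi : e_c |-> e_(xi :: c) if xi > top of c (or c is empty), 0 otherwise *)
Definition Bplus (xi : T) (v : vect) : vect := fun c =>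
  match c with
  | [::] => 0
  | x :: c' => if (x == xi) && `[< is_chain c >] then v c' else 0
  end.

(* B^-_xi : e_(xi :: c) |-> e_c, e_c |-> 0 if the top of c is not xi *)
Definition Bminus (xi : T) (v : vect) : vect := fun c =>
  if `[< is_chain (xi :: c) >] then v (xi :: c) else 0.

Definition Bcons (xi : T) (v : vect) : vect := fun c =>
  match c with
  | [::] => 0
  | x :: _ => if x == xi then v c else 0
  end.

Definition preserves_F0 (X : vect -> vect) : Prop :=
  forall v, F0 v -> F0 (X v).

Definition is_adjoint (X Y : vect -> vect) : Prop :=
  forall u v, F0 u -> F0 v -> inner (X u) v = inner u (Y v).

Inductive star_alg (G : (vect -> vect) -> Prop) : (vect -> vect) -> Prop :=
| sa_gen X : G X -> star_alg G X
| sa_add X Y : star_alg G X -> star_alg G Y ->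
    star_alg G (fun v c => X v c + Y v c)
| sa_scale (a : K) X : star_alg G X -> star_alg G (fun v c => a * X v c)
| sa_mul X Y : star_alg G X -> star_alg G Y -> star_alg G (fun v => X (Y v))
| sa_adj X Y : star_alg G X -> preserves_F0 Y -> is_adjoint X Y ->
    star_alg G Y.

Definition Calg (xi : T) : (vect -> vect) -> Prop :=
  star_alg (fun X => X = Bplus xi \/ X = Bminus xi \/ X = Bcons xi).

Definition bm_independent (A : T -> (vect -> vect) -> Prop) : Prop :=
  (forall xi rho eta : T,
      (plt xi rho /\ plt eta rho) \/ (incomp xi rho /\ plt eta rho)
      \/ (plt xi rho /\ incomp rho eta) ->
      forall a1 a2 a3, A xi a1 -> A rho a2 -> A eta a3 ->
      forall v, F0 v -> a1 (a2 (a3 v)) = (fun c => vac_state a2 * a1 (a3 v) c))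
  /\
  (* BM2: indices and operators are numbered 1..n *)
  (forall (n m k : nat) (xs : nat -> T) (a : nat -> (vect -> vect)),
      (1 <= m <= k)%N -> (k <= n)%N ->
      (forall i, (1 <= i < m)%N -> plt (xs i.+1) (xs i)) ->
      (forall i, (m <= i < k)%N -> incomp (xs i) (xs i.+1)) ->
      (forall i, (k <= i < n)%N -> plt (xs i) (xs i.+1)) ->
      (forall j, (1 <= j <= n)%N -> A (xs j) (a j)) ->
      vac_state (foldr (fun j acc => fun v => a j (acc v)) id (iota 1 n))
      = \prod_(1 <= j < n.+1) vac_state (a j)).

End Generic.

Inductive cone_case := Orthant | Lorentz | PSDcone.

Section Cones.
Variables (R : realType) (d : nat).

Definition IdxA : choiceType := {ffun 'I_d -> nat}.
Definition leA (x y : IdxA) : Prop := forall i, (x i <= y i)%N.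

Definition IdxB : choiceType := (nat * {ffun 'I_d -> int})%type.
Definition leB (p q : IdxB) : Prop :=
  Num.sqrt (\sum_(i < d) ((q.2 i - p.2 i)%:~R : R) ^+ 2)
    <= (q.1%:R : R) - (p.1%:R : R).

Definition psd_real (M : 'M[R]_d) : Prop :=
  M^T = M /\ forall v : 'cV[R]_d, 0 <= (v^T *m M *m v) 0 0.
Definition psd_int (M : 'M[int]_d) : Prop := psd_real (map_mx intr M).
Definition IdxC : choiceType := {M : 'M[int]_d | `[< psd_int M >]}.
Definition leC (x y : IdxC) : Prop := psd_real (map_mx intr (val y - val x)).

Definition Idx (cc : cone_case) : choiceType :=
  match cc with Orthant => IdxA | Lorentz => IdxB | PSDcone => IdxC end.

Definition idx_le (cc : cone_case) : Idx cc -> Idx cc -> Prop :=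
  match cc return Idx cc -> Idx cc -> Prop with
  | Orthant => leA | Lorentz => leB | PSDcone => leC end.
End Cones.

From HB Require Import structures.
From mathcomp Require Import all_boot all_order all_algebra.
From mathcomp Require Import boolp classical_sets fsbigop reals.
From mathcomp.real_closed Require Import complex.
From mathcomp Require Import ring zify lra.

Set Implicit Arguments.
Unset Strict Implicit.
Unset Printing Implicit Defensive.

Import Order.TTheory GRing.Theory Num.Theory.
Local Open Scope ring_scope.

(* For each chain c that xi can extend, F_0 contains the plane spanned by
   e_c and e_(xi :: c), and these planes are mutually orthogonal.  Each of
   B^+_xi, B^-_xi, B^o_xi acts on every such plane by one and the same 2x2
   matrix and kills all other basis vectors; this property survives sums,
   products and adjoints, so every element of C_xi is such a "block
   operator", and its vacuum expectation is the (0,0) entry of its matrix.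
   BM1 and BM2 then reduce to the observation that a block operator for xi
   only reads the coordinates of its argument at the empty chain and at
   chains whose top is at most xi. *)

Lemma sum_ord2 (V : nmodType) (F : 'I_2 -> V) : \sum_(k < 2) F k = F 0 + F 1.
Proof. by rewrite big_ord_recl big_ord1; congr (_ + F _); apply: val_inj. Qed.

Lemma cons_neq (T : eqType) (x : T) (s : seq T) : x :: s != s.
Proof. by apply/eqP => /(congr1 size) /=; lia. Qed.

Section Chains.
Variables (T : choiceType) (le : T -> T -> Prop).

Definition extends_by (xi : T) (c : seq T) : bool := `[< is_chain le (xi :: c) >].

Definition topped_by (xi : T) (c : seq T) : bool :=
  if c is x :: _ then (x == xi) && `[< is_chain le c >] else false.

Definition in_plane (xi : T) (c : seq T) : bool := topped_by xi c || extends_by xi c.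

Lemma extends_by_nil xi : extends_by xi [::].
Proof. exact/asboolP. Qed.

Lemma extends_by_chain xi c : extends_by xi c -> is_chain le c.
Proof. by move/asboolP => []. Qed.

Lemma topped_by_cons xi c : topped_by xi (xi :: c) = extends_by xi c.
Proof. by rewrite /= eqxx. Qed.

Lemma topped_byE xi c : topped_by xi c -> c = xi :: behead c /\ extends_by xi (behead c).
Proof. by case: c => [|x c] //= /andP[/eqP-> ?]. Qed.

Lemma extends_by_not_topped xi c : extends_by xi c -> ~~ topped_by xi c.
Proof.
move=> ext_c; apply/negP => /topped_byE[c_eq _].
by move: ext_c; rewrite c_eq => /asboolP[[_]].
Qed.

Lemma topped_by_not_extends xi c : topped_by xi c -> ~~ extends_by xi c.
Proof. by apply: contraTN; exact: extends_by_not_topped. Qed.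

Lemma in_plane_chain xi c : in_plane xi c -> is_chain le c.
Proof.
by case/orP => [|/extends_by_chain//]; case: c => //= x c /andP[_ /asboolP].
Qed.

Lemma in_plane_cons xi x c : in_plane xi (x :: c) -> x = xi \/ plt le x xi.
Proof. by case/orP => [/andP[/eqP ->]|/asboolP[]]; [left|right]. Qed.

End Chains.

Section BlockOperators.
Variables (T : choiceType) (le : T -> T -> Prop) (K : numClosedFieldType).

Local Notation vec := (vect T K).

Lemma F0_chain (v : vec) c : F0 le v -> ~ is_chain le c -> v c = 0.
Proof. by move=> [s supp_v] not_chain; apply/eqP/negPn/negP => /supp_v[_ /not_chain]. Qed.

Definition unit_vec (c : seq T) : vec := fun d => (d == c)%:R.

Lemma unit_vec_F0 c : is_chain le c -> F0 le (unit_vec c).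
Proof.
move=> chain_c; exists [:: c] => d; rewrite /unit_vec.
case: (eqVneq d c) => [-> _|_]; first by rewrite mem_seq1 eqxx.
by rewrite eqxx.
Qed.

Lemma F0_Omega : F0 le (Omega K).
Proof. exact: (@unit_vec_F0 [::]). Qed.

Lemma inner_supp (u w : vec) (s : seq (seq T)) : uniq s ->
  (forall d, d \notin s -> u d * (w d)^* = 0) ->
  inner u w = \sum_(d <- s) u d * (w d)^*.
Proof.
move=> uniq_s supp_uw; rewrite /inner (fsbigE s) //; last by move=> d _; exact: supp_uw.
by apply: eq_bigl => d; rewrite in_setT.
Qed.

Lemma inner_Omega (w : vec) : inner w (Omega K) = w [::].
Proof.
rewrite (inner_supp (s := [:: [::]])) // ?big_seq1 /Omega ?eqxx ?conjC1 ?mulr1 //.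
by move=> d; rewrite inE => /negbTE ->; rewrite conjC0 mulr0.
Qed.

Lemma inner_unit_vec c (w : vec) : inner (unit_vec c) w = (w c)^*.
Proof.
rewrite (inner_supp (s := [:: c])) // ?big_seq1 /unit_vec ?eqxx ?mul1r //.
by move=> d; rewrite inE => /negbTE ->; rewrite mul0r.
Qed.

Lemma inner_pair c1 c2 p q (w : vec) : c1 != c2 ->
  inner (fun d => p * unit_vec c1 d + q * unit_vec c2 d) w = p * (w c1)^* + q * (w c2)^*.
Proof.
move=> c12; rewrite (inner_supp (s := [:: c1; c2])) /= ?inE ?c12 //.
  rewrite !big_cons big_nil /unit_vec !eqxx (negbTE c12) eq_sym (negbTE c12) /=.
  ring.
by move=> d; rewrite !inE negb_or /unit_vec => /andP[/negbTE-> /negbTE->] /=; ring.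
Qed.

(* The operator acting on each plane span(e_c, e_(xi :: c)) by the matrix M
   in that ordered basis, and killing every other basis vector. *)
Definition block (xi : T) (M : 'M[K]_2) (v : vec) : vec := fun c =>
  if topped_by le xi c then M 1 0 * v (behead c) + M 1 1 * v c
  else if extends_by le xi c then M 0 0 * v c + M 0 1 * v (xi :: c)
  else 0.

Definition acts_by (xi : T) (X : vec -> vec) (M : 'M[K]_2) : Prop :=
  forall v, F0 le v -> X v = block xi M v.

Variable xi : T.

Lemma block_off_plane M (v : vec) c : ~~ in_plane le xi c -> block xi M v c = 0.
Proof. by rewrite /block negb_or => /andP[/negbTE-> /negbTE->]. Qed.

Lemma block_nil M (v : vec) : block xi M v [::] = M 0 0 * v [::] + M 0 1 * v [:: xi].
Proof. by rewrite /block /= extends_by_nil. Qed.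

Lemma eq_block_on_planes M (u w : vec) :
  (forall d, in_plane le xi d -> u d = w d) -> block xi M u = block xi M w.
Proof.
move=> uw; apply: funext => c; rewrite /block.
case top_c: (topped_by le xi c).
  have [_ ext_bc] := topped_byE top_c.
  by rewrite !uw /in_plane ?top_c ?ext_bc ?orbT.
case ext_c: (extends_by le xi c) => //.
by rewrite !uw /in_plane ?topped_by_cons ?ext_c ?orbT.
Qed.

Lemma blockZ M p (v : vec) : block xi M (fun d => p * v d) = fun c => p * block xi M v c.
Proof. by apply: funext => c; rewrite /block; case: ifP => _; [|case: ifP => _]; ring. Qed.

Lemma blockDl M N (v : vec) c : block xi (M + N) v c = block xi M v c + block xi N v c.
Proof. by rewrite /block !mxE; case: ifP => _; [|case: ifP => _]; ring. Qed.

Lemma blockZl p M (v : vec) c : block xi (p *: M) v c = p * block xi M v c.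
Proof. by rewrite /block !mxE; case: ifP => _; [|case: ifP => _]; ring. Qed.

Lemma block_mul M N (v : vec) : block xi M (block xi N v) = block xi (M *m N) v.
Proof.
apply: funext => c; rewrite {1}/block.
case top_c: (topped_by le xi c).
  have [c_eq ext_c] := topped_byE top_c.
  rewrite /block top_c ext_c (negbTE (extends_by_not_topped ext_c)) -c_eq !mxE !sum_ord2.
  ring.
case ext_c: (extends_by le xi c); last by rewrite /block top_c ext_c.
by rewrite /block top_c ext_c topped_by_cons ext_c /= !mxE !sum_ord2; ring.
Qed.

Lemma block_F0 M (v : vec) : F0 le v -> F0 le (block xi M v).
Proof.
move=> [s supp_v]; exists (map (cons xi) s ++ s ++ map behead s) => c.
have in_s d : v d != 0 -> d \in s by move/supp_v => [].
rewrite !mem_cat; case plane_c: (in_plane le xi c); last first.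
  by rewrite block_off_plane ?plane_c ?eqxx.
move=> nz; split; last exact: in_plane_chain plane_c.
move: nz; rewrite /block; case top_c: (topped_by le xi c).
  have [c_eq _] := topped_byE top_c.
  case: (eqVneq (v (behead c)) 0) => [-> | /in_s bc_in]; last first.
    by rewrite c_eq map_f.
  by rewrite mulr0 add0r; case: (eqVneq (v c) 0) => [->|/in_s ->]; rewrite ?mulr0 ?eqxx ?orbT.
case: ifP => _; last by rewrite eqxx.
case: (eqVneq (v c) 0) => [-> | /in_s ->]; last by rewrite orbT.
rewrite mulr0 add0r; case: (eqVneq (v (xi :: c)) 0) => [->|/in_s xc_in]; first by rewrite mulr0 eqxx.
by rewrite (map_f behead xc_in) !orbT.
Qed.

Lemma acts_by_F0 X M : acts_by xi X M -> preserves_F0 le X.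
Proof. by move=> X_M v F0v; rewrite X_M //; exact: block_F0. Qed.

Lemma vac_state_block X M : acts_by xi X M -> vac_state X = M 0 0.
Proof.
move=> X_M; rewrite /vac_state inner_Omega X_M; last exact: F0_Omega.
by rewrite block_nil /Omega /= mulr1 mulr0 addr0.
Qed.

Lemma block_unit_vec_topped M c : topped_by le xi c ->
  block xi M (unit_vec c) = fun d => M 1 1 * unit_vec c d + M 0 1 * unit_vec (behead c) d.
Proof.
move=> top_c; have [c_eq ext_bc] := topped_byE top_c.
have bc_c : behead c != c by rewrite eq_sym {1}c_eq cons_neq.
apply: funext => d; rewrite /unit_vec.
have [->|d_c] := eqVneq d c.
  by rewrite /block top_c eqxx [c == _]eq_sym (negbTE bc_c) /=; ring.
have [->|d_bc] := eqVneq d (behead c).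
  rewrite /block (negbTE (extends_by_not_topped ext_bc)) ext_bc -c_eq eqxx.
  by rewrite (negbTE bc_c) /=; ring.
rewrite /block; case: ifP => [/topped_byE[_ ext_bd]|_].
  have bd_c : behead d != c.
    by apply: contraTneq top_c => <-; exact: extends_by_not_topped.
  by rewrite (negbTE bd_c) (negbTE d_c) /=; ring.
case: ifP => _ /=; last ring.
have xd_c : xi :: d != c by apply: contra_neq d_bc => <-.
by rewrite (negbTE xd_c) (negbTE d_c) /=; ring.
Qed.

Lemma block_unit_vec_extended M c : extends_by le xi c ->
  block xi M (unit_vec c) = fun d => M 0 0 * unit_vec c d + M 1 0 * unit_vec (xi :: c) d.
Proof.
move=> ext_c; have ntop_c := extends_by_not_topped ext_c.
have xc_c : xi :: c != c := cons_neq xi c.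
apply: funext => d; rewrite /unit_vec.
have [->|d_c] := eqVneq d c.
  by rewrite /block (negbTE ntop_c) ext_c eqxx (negbTE xc_c) eq_sym (negbTE xc_c) /=; ring.
have [->|d_xc] := eqVneq d (xi :: c).
  by rewrite /block topped_by_cons ext_c /= eqxx (negbTE xc_c) /=; ring.
rewrite /block; case: ifP => [/topped_byE[d_eq _]|_].
  have bd_c : behead d != c by apply: contra_neq d_xc => bd_c; rewrite d_eq bd_c.
  by rewrite (negbTE bd_c) (negbTE d_c) /=; ring.
case: ifP => ext_d /=; last ring.
have xd_c : xi :: d != c by apply: contraNneq ntop_c => <-; rewrite topped_by_cons.
by rewrite (negbTE xd_c) (negbTE d_c) /=; ring.
Qed.

Lemma block_unit_vec_off_plane M c : ~~ in_plane le xi c -> block xi M (unit_vec c) = fun=> 0.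
Proof.
rewrite /in_plane negb_or => /andP[ntop_c next_c]; apply: funext => d; rewrite /block /unit_vec.
case top_d: (topped_by le xi d).
  have [_ ext_bd] := topped_byE top_d.
  have bd_c : behead d != c by apply: contraNneq next_c => <-.
  have d_c : d != c by apply: contraNneq ntop_c => <-.
  by rewrite (negbTE bd_c) (negbTE d_c) /=; ring.
case ext_d: (extends_by le xi d) => //.
have d_c : d != c by apply: contraNneq next_c => <-.
have xd_c : xi :: d != c by apply: contraNneq ntop_c => <-; rewrite topped_by_cons.
by rewrite (negbTE d_c) (negbTE xd_c) /=; ring.
Qed.

(* Testing against the orthonormal basis: Y v c = <e_c, Y v>^* = <X e_c, v>^*. *)
Lemma block_adjoint X Y M : acts_by xi X M -> preserves_F0 le Y -> is_adjoint le X Y ->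
  acts_by xi Y (map_mx Num.conj M^T).
Proof.
move=> X_M F0_Y adj_XY v F0v; apply: funext => c.
have [chain_c|not_chain] := asboolP (is_chain le c); last first.
  rewrite (F0_chain (F0_Y v F0v) not_chain) block_off_plane //.
  by apply: contra_notN not_chain; exact: in_plane_chain.
have -> : Y v c = (inner (X (unit_vec c)) v)^*.
  by rewrite adj_XY ?inner_unit_vec ?conjCK //; exact: unit_vec_F0.
rewrite X_M; last exact: unit_vec_F0.
rewrite [in RHS]/block !mxE.
case top_c: (topped_by le xi c).
  have [c_eq _] := topped_byE top_c.
  rewrite block_unit_vec_topped // inner_pair; last by rewrite {1}c_eq cons_neq.
  by rewrite rmorphD !rmorphM /= !conjCK addrC.
case ext_c: (extends_by le xi c).
  rewrite block_unit_vec_extended // inner_pair; last by rewrite eq_sym cons_neq.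
  by rewrite rmorphD !rmorphM /= !conjCK.
rewrite block_unit_vec_off_plane /in_plane ?top_c ?ext_c //.
by rewrite (inner_supp (s := [::])) // ?big_nil ?conjC0 // => d _; rewrite mul0r.
Qed.

Lemma Bplus_block : Bplus le xi = block xi (delta_mx 1 0).
Proof.
apply: funext => v; apply: funext => -[|x c]; rewrite /Bplus /block !mxE /=.
  by rewrite extends_by_nil; ring.
by case: ifP => _; [|case: ifP => _ //]; ring.
Qed.

Lemma Bminus_block : Bminus le xi = block xi (delta_mx 0 1).
Proof.
apply: funext => v; apply: funext => c; rewrite /Bminus /block !mxE /= -/(extends_by le xi c).
case top_c: (topped_by le xi c); last by case: ifP => _ //; ring.
by rewrite (negbTE (topped_by_not_extends top_c)); ring.
Qed.

Lemma Bcons_block : acts_by xi (Bcons xi) (delta_mx 1 1).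
Proof.
move=> v F0v; apply: funext => -[|x c]; rewrite /Bcons /block !mxE /=.
  by rewrite extends_by_nil; ring.
case: eqP => [x_xi|_] /=; last by case: ifP => _ //; ring.
case: asboolP => [_|not_chain]; first ring.
by rewrite (@F0_chain _ (x :: c) F0v not_chain); case: ifP => _ //; ring.
Qed.

Lemma Calg_block X : Calg le xi X -> exists M, acts_by xi X M.
Proof.
elim => [_ [->|[->|->]] | X1 X2 _ [M1 X1_M] _ [M2 X2_M] | p X1 _ [M X1_M]
        | X1 X2 _ [M1 X1_M] _ [M2 X2_M] | X1 Y _ [M X1_M] F0_Y adj_XY].
- by exists (delta_mx 1 0) => v _; rewrite Bplus_block.
- by exists (delta_mx 0 1) => v _; rewrite Bminus_block.
- by exists (delta_mx 1 1); exact: Bcons_block.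
- by exists (M1 + M2) => v F0v; apply: funext => c; rewrite blockDl X1_M ?X2_M.
- by exists (p *: M) => v F0v; apply: funext => c; rewrite blockZl X1_M.
- exists (M1 *m M2) => v F0v.
  rewrite X2_M // X1_M ?block_mul //.
  exact: block_F0.
- by exists (map_mx Num.conj M^T); exact: block_adjoint X1_M F0_Y adj_XY.
Qed.

End BlockOperators.

Section PartialOrder.
Variables (T : choiceType) (le : T -> T -> Prop) (K : numClosedFieldType).
Hypotheses (refl_le : forall x, le x x)
  (antisym_le : forall x y, le x y -> le y x -> x = y)
  (trans_le : forall x y z, le x y -> le y z -> le x z).

Local Notation vec := (vect T K).

Lemma plt_nge x y : plt le x y -> ~ le y x.
Proof. by move=> [xy nxy] yx; apply: nxy; exact: antisym_le xy yx. Qed.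

Lemma le_plt_trans x y z : le x y -> plt le y z -> plt le x z.
Proof.
move=> xy [yz nyz]; split; first exact: trans_le xy yz.
by move=> xz; apply: nyz; apply: (antisym_le yz); rewrite -xz.
Qed.

Lemma in_plane_cons_le xi x c : in_plane le xi (x :: c) -> le x xi.
Proof. by case/in_plane_cons => [->|[]]. Qed.

Lemma block_singleton xi M (v : vec) x : ~ le x xi -> block le xi M v [:: x] = 0.
Proof.
by move=> nle; apply: block_off_plane; apply: contra_notN nle; exact: in_plane_cons_le.
Qed.

Lemma block_block_Omega xi eta M N : ~ le eta xi ->
  block le xi M (block le eta N (Omega K)) = fun c => N 0 0 * block le xi M (Omega K) c.
Proof.
move=> nle; rewrite -blockZ; apply: eq_block_on_planes => -[|x d] plane_d.
  by rewrite block_nil /Omega /=; ring.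
rewrite /block; case: ifP => [/andP[/eqP x_eta _]|_].
  by exfalso; apply: nle; rewrite -x_eta; exact: in_plane_cons_le plane_d.
by rewrite /Omega /=; case: ifP => _ //=; ring.
Qed.

(* On the coordinates read by the outer block operator, the middle one acts
   as the scalar M2 0 0. *)
Lemma block_sandwich xi rho eta M1 M2 M3 (v : vec) :
  ~ le rho xi -> ~ le rho eta -> (forall x, le x xi -> le x eta -> plt le x rho) ->
  block le xi M1 (block le rho M2 (block le eta M3 v))
  = fun c => M2 0 0 * block le xi M1 (block le eta M3 v) c.
Proof.
move=> nrx nre below; rewrite -blockZ; apply: eq_block_on_planes => d plane_d.
set w := block le eta M3 v.
have w_rho d' : w (rho :: d') = 0.
  by apply: block_off_plane; apply: contra_notN nre; exact: in_plane_cons_le.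
case: d plane_d => [|x d] plane_d; first by rewrite block_nil w_rho mulr0 addr0.
have ntop : ~~ topped_by le rho (x :: d).
  by apply/negP => /andP[/eqP x_rho _]; apply: nrx; rewrite -x_rho; exact: in_plane_cons_le plane_d.
rewrite /block (negbTE ntop); case: ifP => [_|/negbT/asboolPn next].
  by rewrite w_rho mulr0 addr0.
suff -> : w (x :: d) = 0 by rewrite mulr0.
apply: block_off_plane; apply/negP => plane_eta; apply: next; split.
  exact: below (in_plane_cons_le plane_d) (in_plane_cons_le plane_eta).
exact: in_plane_chain plane_eta.
Qed.

Lemma bm1_conditions xi rho eta :
  (plt le xi rho /\ plt le eta rho) \/ (incomp le xi rho /\ plt le eta rho)
    \/ (plt le xi rho /\ incomp le rho eta) ->
  [/\ ~ le rho xi, ~ le rho eta & forall x, le x xi -> le x eta -> plt le x rho].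
Proof.
case=> [[xr er]|[[[_ nrx] er]|[xr [nre _]]]].
- by split; [exact: plt_nge xr | exact: plt_nge er | move=> x _ xe; exact: le_plt_trans xe er].
- by split; [ | exact: plt_nge er | move=> x _ xe; exact: le_plt_trans xe er].
- by split; [exact: plt_nge xr | | move=> x xx _; exact: le_plt_trans xx xr].
Qed.

Lemma bm1_Calg xi rho eta :
  (plt le xi rho /\ plt le eta rho) \/ (incomp le xi rho /\ plt le eta rho)
    \/ (plt le xi rho /\ incomp le rho eta) ->
  forall a1 a2 a3 : vec -> vec, Calg le xi a1 -> Calg le rho a2 -> Calg le eta a3 ->
  forall v, F0 le v -> a1 (a2 (a3 v)) = (fun c => vac_state a2 * a1 (a3 v) c).
Proof.
move=> /bm1_conditions[nrx nre below] a1 a2 a3.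
move=> /Calg_block[M1 a1_M] /Calg_block[M2 a2_M] /Calg_block[M3 a3_M] v F0v.
have F0_a3v := acts_by_F0 a3_M F0v.
rewrite (vac_state_block a2_M) (a1_M _ (acts_by_F0 a2_M F0_a3v)) (a1_M _ F0_a3v).
by rewrite (a2_M _ F0_a3v) (a3_M _ F0v); exact: block_sandwich.
Qed.

Section VacuumProduct.
Variables (n m : nat) (xs : nat -> T) (a : nat -> vec -> vec) (M : nat -> 'M[K]_2).
Hypotheses (a_M : forall j, (1 <= j <= n)%N -> acts_by le (xs j) (a j) (M j))
  (m_range : (1 <= m <= n)%N)
  (xs_before_m : forall j, (1 <= j < m)%N -> ~ le (xs j) (xs j.+1))
  (xs_after_m : forall j, (m <= j < n)%N -> ~ le (xs j.+1) (xs j)).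

(* tail_vec j = a_j (a_(j+1) (... (a_n Omega))) *)
Let tail_vec j := foldr (fun i acc => fun v => a i (acc v)) id (iota j (n.+1 - j)) (Omega K).

Let tail_vecS j : (j <= n)%N -> tail_vec j = a j (tail_vec j.+1).
Proof. by move=> jn; rewrite /tail_vec subSS subSn. Qed.

Let tail_vec_F0 j : (1 <= j)%N -> F0 le (tail_vec j).
Proof.
move=> j1; rewrite /tail_vec.
have : all (fun i => 1 <= i <= n)%N (iota j (n.+1 - j)) by apply/allP => i; rewrite mem_iota; lia.
elim: (iota _ _) => [|i s IH] /=; first by move=> _; exact: F0_Omega.
by case/andP => /a_M a_i /IH F0_s; exact: acts_by_F0 a_i _ F0_s.
Qed.

Let tail_vec_after_m j : (m <= j <= n)%N ->
  tail_vec j = fun c => (\prod_(j.+1 <= i < n.+1) M i 0 0) * block le (xs j) (M j) (Omega K) c.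
Proof.
move Et : (n - j)%N => t; elim: t j Et => [|t IH] j Et jr.
  have -> : j = n by lia.
  rewrite tail_vecS // /tail_vec subnn /= a_M; [|lia|exact: F0_Omega].
  by apply: funext => c; rewrite big_geq // mul1r.
rewrite tail_vecS; last by lia.
rewrite a_M; [|lia|apply: tail_vec_F0; lia].
rewrite IH; [|lia|lia].
rewrite blockZ block_block_Omega; last by apply: xs_after_m; lia.
by apply: funext => c; rewrite (big_ltn (m := j.+1)); [ring|lia].
Qed.

Let tail_vec_before_m j : (1 <= j <= m)%N ->
  tail_vec j [::] = (\prod_(j <= i < m) M i 0 0) * tail_vec m [::].
Proof.
move Et : (m - j)%N => t; elim: t j Et => [|t IH] j Et jr.
  have -> : j = m by lia.
  by rewrite big_geq // mul1r.
rewrite tail_vecS; last by lia.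
rewrite a_M; [|lia|apply: tail_vec_F0; lia].
rewrite block_nil.
have -> : tail_vec j.+1 [:: xs j] = 0.
  rewrite tail_vecS; last by lia.
  rewrite (a_M (j := j.+1)); [|lia|apply: tail_vec_F0; lia].
  by apply: block_singleton; apply: xs_before_m; lia.
by rewrite mulr0 addr0 IH; [rewrite (big_ltn (m := j)); [ring|lia]|lia|lia].
Qed.

Lemma vac_state_compose :
  vac_state (foldr (fun j acc => fun v => a j (acc v)) id (iota 1 n))
  = \prod_(1 <= j < n.+1) M j 0 0.
Proof.
rewrite /vac_state inner_Omega.
have -> : foldr (fun j acc => fun v => a j (acc v)) id (iota 1 n) (Omega K) = tail_vec 1.
  by rewrite /tail_vec subSS subn0.
rewrite tail_vec_before_m ?tail_vec_after_m; [|lia|lia].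
rewrite block_nil /Omega /= mulr1 mulr0 addr0.
rewrite [RHS](big_cat_nat (n := m)) /=; [|lia|lia].
by rewrite [in RHS](big_ltn (m := m)); [ring|lia].
Qed.

End VacuumProduct.

Theorem Calg_bm_independent : bm_independent le (@Calg T le K).
Proof.
split; first exact: bm1_Calg.
move=> n m k xs a mk kn xs_desc xs_incomp xs_asc Calg_a.
have /choice[M a_M] : forall j, exists N, (1 <= j <= n)%N -> acts_by le (xs j) (a j) N.
  move=> j; have [/Calg_a/Calg_block[N a_N]|_] := boolP (1 <= j <= n)%N; first by exists N.
  by exists 0.
rewrite (vac_state_compose (m := m) (xs := xs) (M := M)) //.
- by apply: eq_big_nat => j j_range; rewrite (vac_state_block (a_M j _)).
- lia.
- by move=> j j_range; apply: plt_nge; apply: xs_desc.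
- move=> j j_range; have [j_k|k_j] := ltnP j k; first by case: (xs_incomp j) => //; lia.
  by apply: plt_nge; apply: xs_asc; lia.
Qed.

End PartialOrder.

Lemma lagrange_identity (R : comNzRingType) (I : finType) (a b : I -> R) :
  \sum_i \sum_j (a i * b j - a j * b i) ^+ 2 =
  2 * ((\sum_i a i ^+ 2) * (\sum_i b i ^+ 2) - (\sum_i a i * b i) ^+ 2).
Proof.
have expand (u w : I -> R) : (\sum_i u i) * (\sum_i w i) = \sum_i \sum_j u i * w j.
  by rewrite mulr_suml; apply: eq_bigr => i _; rewrite mulr_sumr.
have -> : 2 * ((\sum_i a i ^+ 2) * (\sum_i b i ^+ 2) - (\sum_i a i * b i) ^+ 2)
    = (\sum_i a i ^+ 2) * (\sum_i b i ^+ 2) + (\sum_i b i ^+ 2) * (\sum_i a i ^+ 2)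
      - 2 * ((\sum_i a i * b i) * (\sum_i a i * b i)) by ring.
rewrite !expand -big_split /= mulr_sumr -sumrB.
apply: eq_bigr => i _; rewrite mulr_sumr -big_split -sumrB /=.
by apply: eq_bigr => j _; ring.
Qed.

Lemma cauchy_schwarz (R : realDomainType) (I : finType) (a b : I -> R) :
  (\sum_i a i * b i) ^+ 2 <= (\sum_i a i ^+ 2) * (\sum_i b i ^+ 2).
Proof.
have : 0 <= \sum_i \sum_j (a i * b j - a j * b i) ^+ 2.
  by apply: sumr_ge0 => i _; apply: sumr_ge0 => j _; exact: sqr_ge0.
by rewrite lagrange_identity pmulr_rge0 // subr_ge0.
Qed.

Lemma minkowski (R : rcfType) (I : finType) (a b : I -> R) :
  Num.sqrt (\sum_i (a i + b i) ^+ 2) <=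
  Num.sqrt (\sum_i a i ^+ 2) + Num.sqrt (\sum_i b i ^+ 2).
Proof.
set A := \sum_i a i ^+ 2; set B := \sum_i b i ^+ 2; set C := \sum_i a i * b i.
have A_ge0 : 0 <= A by apply: sumr_ge0 => i _; exact: sqr_ge0.
have B_ge0 : 0 <= B by apply: sumr_ge0 => i _; exact: sqr_ge0.
have C_le : C <= Num.sqrt A * Num.sqrt B.
  have [C_le0|C_gt0] := lerP C 0; first by apply: le_trans C_le0 _; rewrite mulr_ge0 ?sqrtr_ge0.
  rewrite -sqrtrM // -(ger0_norm (ltW C_gt0)) -sqrtr_sqr.
  exact/ler_wsqrtr/cauchy_schwarz.
have -> : \sum_i (a i + b i) ^+ 2 = A + B + 2 * C.
  by rewrite /A /B /C mulr_sumr -!big_split /=; apply: eq_bigr => i _; ring.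
have sum_ge0 : 0 <= Num.sqrt A + Num.sqrt B by rewrite addr_ge0 ?sqrtr_ge0.
rewrite -(ger0_norm sum_ge0) -sqrtr_sqr; apply: ler_wsqrtr.
by rewrite sqrrD !sqr_sqrtr //; lra.
Qed.

Lemma leA_refl d (x : IdxA d) : leA x x.
Proof. by move=> i. Qed.

Lemma leA_anti d (x y : IdxA d) : leA x y -> leA y x -> x = y.
Proof. by move=> xy yx; apply/ffunP => i; apply/eqP; rewrite eqn_leq xy yx. Qed.

Lemma leA_trans d (x y z : IdxA d) : leA x y -> leA y z -> leA x z.
Proof. by move=> xy yz i; exact: leq_trans (xy i) (yz i). Qed.

Section LorentzCone.
Variables (R : realType) (d : nat).

Lemma leB_refl (x : IdxB d) : leB R x x.
Proof. by rewrite /leB subrr big1 ?sqrtr0 // => i _; rewrite subrr expr0n. Qed.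

Lemma leB_trans (x y z : IdxB d) : leB R x y -> leB R y z -> leB R x z.
Proof.
rewrite /leB => xy yz.
have -> : \sum_(i < d) ((z.2 i - x.2 i)%:~R : R) ^+ 2
    = \sum_(i < d) ((z.2 i - y.2 i)%:~R + (y.2 i - x.2 i)%:~R) ^+ 2.
  by apply: eq_bigr => i _; rewrite -intrD subrKA.
by apply: le_trans (minkowski _ _) _; lra.
Qed.

Lemma leB_anti (x y : IdxB d) : leB R x y -> leB R y x -> x = y.
Proof.
rewrite /leB => xy yx.
have norm_ge0 (p q : IdxB d) := sqrtr_ge0 (\sum_(i < d) ((q.2 i - p.2 i)%:~R : R) ^+ 2).
have time_eq : x.1 = y.1.
  by apply/eqP; rewrite -(eqr_nat R); have := norm_ge0 x y; have := norm_ge0 y x; lra.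
have sum_le0 : \sum_(i < d) ((y.2 i - x.2 i)%:~R : R) ^+ 2 <= 0.
  by rewrite -sqrtr_eq0 eq_le sqrtr_ge0 andbT; move: xy; rewrite time_eq subrr.
have sum_eq0 : \sum_(i < d) ((y.2 i - x.2 i)%:~R : R) ^+ 2 = 0.
  by apply/eqP; rewrite eq_le sum_le0 sumr_ge0 // => i _; exact: sqr_ge0.
have space_eq : x.2 = y.2.
  apply/ffunP => i; apply/eqP; rewrite eq_sym -subr_eq0 -(intr_eq0 R) -sqrf_eq0.
  by rewrite (psumr_eq0P _ sum_eq0) // => j _; exact: sqr_ge0.
by rewrite [x]surjective_pairing [y]surjective_pairing time_eq space_eq.
Qed.

End LorentzCone.

Section PSDCone.
Variables (R : realType) (d : nat).

Definition qform (A : 'M[R]_d) (v : 'cV[R]_d) : R := (v^T *m A *m v) 0 0.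

Lemma qformD A B v : qform (A + B) v = qform A v + qform B v.
Proof. by rewrite /qform mulmxDr mulmxDl mxE. Qed.

Lemma qformN A v : qform (- A) v = - qform A v.
Proof. by rewrite /qform mulmxN mulNmx mxE. Qed.

Lemma psd_realD (A B : 'M[R]_d) : psd_real A -> psd_real B -> psd_real (A + B).
Proof.
move=> [symA psdA] [symB psdB]; split; first by rewrite raddfD /= symA symB.
by move=> v; rewrite -/(qform _ v) qformD addr_ge0 ?psdA ?psdB.
Qed.

(* Polarization: a symmetric form whose quadratic form vanishes is zero. *)
Lemma psd_real_anti (A : 'M[R]_d) : psd_real A -> psd_real (- A) -> A = 0.
Proof.
move=> [symA psdA] [_ psdNA].
have qA0 v : qform A v = 0.
  by apply/eqP; rewrite eq_le psdA -oppr_ge0 -qformN psdNA.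
have bilin_sym (u w : 'cV[R]_d) : (u^T *m A *m w) 0 0 = (w^T *m A *m u) 0 0.
  have -> : (u^T *m A *m w) 0 0 = ((u^T *m A *m w)^T) 0 0 by rewrite [RHS]mxE.
  by rewrite !trmx_mul trmxK symA mulmxA.
have bilin0 (u w : 'cV[R]_d) : (u^T *m A *m w) 0 0 = 0.
  have addE (B C : 'M[R]_1) : (B + C) 0 0 = B 0 0 + C 0 0 by rewrite mxE.
  have := qA0 (u + w); rewrite /qform !raddfD /= !mulmxDl !addE.
  have := qA0 u; have := qA0 w; rewrite /qform [(w^T *m A *m u) 0 0]bilin_sym; lra.
apply/matrixP => i j; rewrite [RHS]mxE -(bilin0 (delta_mx i 0) (delta_mx j 0)) trmx_delta.
by rewrite -rowE -colE !mxE.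
Qed.

Lemma leC_refl (x : IdxC R d) : leC x x.
Proof.
rewrite /leC subrr raddf0; split; first by rewrite trmx0.
by move=> v; rewrite mulmx0 mul0mx mxE.
Qed.

Lemma leC_trans (x y z : IdxC R d) : leC x y -> leC y z -> leC x z.
Proof.
rewrite /leC => xy yz; have -> : val z - val x = (val z - val y) + (val y - val x) by rewrite addrA subrK.
by rewrite raddfD; exact: psd_realD.
Qed.

Lemma leC_anti (x y : IdxC R d) : leC x y -> leC y x -> x = y.
Proof.
rewrite /leC => xy yx.
have : map_mx intr (val y - val x) = 0 :> 'M[R]_d.
  by apply: psd_real_anti xy _; rewrite -raddfN opprB.
move/matrixP => yx0; apply: val_inj; apply/matrixP => i j; apply/eqP.
by have := yx0 i j; rewrite !mxE => /eqP; rewrite intr_eq0 subr_eq0 eq_sym.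
Qed.

End PSDCone.

Theorem corollary3p4 (R : realType) (d : nat) (cc : cone_case) :
  bm_independent (@idx_le R d cc)
    (@Calg (Idx R d cc) (@idx_le R d cc) (R[i])%type).
Proof.
case: cc; apply: Calg_bm_independent.
- exact: leA_refl.
- exact: leA_anti.
- exact: leA_trans.
- exact: leB_refl.
- exact: leB_anti.
- exact: leB_trans.
- exact: leC_refl.
- exact: leC_anti.
- exact: leC_trans.
Qed.
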